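(* Let $X$ be a connected locally compact Polish space and $B\subseteq X$ dense. If $\succeq$ and $\succeq'$ are continuous preferences on $X$ with $\succeq\cap(B\times B)=\succeq'\cap(B\times B)$, then $\succeq=\succeq'$.
   Context: A preference is a complete and transitive binary relation on $X$; it is continuous if it is a closed subset of $X\times X$. *)

From HB Require Import structures.
From mathcomp Require Import all_boot all_order all_algebra.
From mathcomp Require Import all_classical all_reals all_analysis.
From mathcomp Require Import Rstruct Rstruct_topology.
Set Implicit Arguments. Unset Strict Implicit. Unset Printing Implicit Defensive.
Import Order.TTheory GRing.Theory Num.Theory.
Local Open Scope classical_set_scope.
Local Open Scope ring_scope.

Definition separable_space (X : topologicalType) : Prop :=
  exists D : set X, countable D /\ dense D.

Definition completely_metrizable (X : topologicalType) : Prop :=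
  exists d : X -> X -> Rdefinitions.R,
    (forall x y, 0 <= d x y) /\
    (forall x y, d x y = 0 <-> x = y) /\
    (forall x y, d x y = d y x) /\
    (forall x y z, d x z <= d x y + d y z) /\
    (forall A : set X,
        open A <-> (forall x, A x -> exists e : Rdefinitions.R,
                       0 < e /\ [set y | d x y < e] `<=` A)) /\
    (forall u : nat -> X,
        (forall e : Rdefinitions.R, 0 < e -> exists N : nat,
            forall m n : nat, (N <= m)%N -> (N <= n)%N -> d (u m) (u n) < e) ->
        exists l : X, u @ \oo --> l).

Definition polish (X : topologicalType) : Prop :=
  separable_space X /\ completely_metrizable X.

(* A preference on X: a complete and transitive binary relation on X,
   viewed as a subset of X * X ((x,y) in P means x ⪰ y). *)
Definition preference (X : Type) (P : set (X * X)) : Prop :=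
  (forall x y : X, P (x, y) \/ P (y, x)) /\
  (forall x y z : X, P (x, y) -> P (y, z) -> P (x, z)).

Definition continuous_preference (X : topologicalType) (P : set (X * X)) : Prop :=
  preference P /\ closed P.

(** Write [x ⪰_P y] for [P (x, y)] and [x ≻_Q y] for [~ Q (y, x)]. Density
    of [B] and the openness of strict preference show that [y ≻_Q x] forces
    [y ⪰_P x]: otherwise the open set of pairs strictly ordered in opposite
    directions by [P] and [Q] would meet [B × B], where the two preferences
    agree. Connectedness of [X] puts a point of [B] strictly between any
    [y ≻_Q x], since otherwise the upper set of [x] would be clopen. Now if
    [x ⪰_P y] but [y ≻_Q x], choose [b, c ∈ B] with [y ≻_Q b ≻_Q x] and
    [b ≻_Q c ≻_Q x]; then [c ⪰_P x ⪰_P y ⪰_P b], so [c ⪰_P b] and hence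
    [c ⪰_Q b], contradicting [b ≻_Q c]. *)
From mathcomp Require Import all_boot all_order all_algebra.
From mathcomp Require Import all_classical all_reals all_analysis.

Set Implicit Arguments.
Unset Strict Implicit.
Unset Printing Implicit Defensive.

Local Open Scope classical_set_scope.

Section ProductSections.
Variables T U : topologicalType.

Lemma continuous_pairl (y : U) : continuous (fun x : T => (x, y)).
Proof. by move=> x; apply: cvg_pair; [exact: cvg_id | exact: cvg_cst]. Qed.

Lemma continuous_pairr (x : T) : continuous (fun y : U => (x, y)).
Proof. by move=> y; apply: cvg_pair; [exact: cvg_cst | exact: cvg_id]. Qed.

Lemma open_sectionl (W : set (T * U)) y : open W -> open [set x | W (x, y)].
Proof. by move: W; apply/continuousP/continuous_pairl. Qed.

Lemma open_sectionr (W : set (T * U)) x : open W -> open [set y | W (x, y)].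
Proof. by move: W; apply/continuousP/continuous_pairr. Qed.

Lemma closed_sectionl (W : set (T * U)) y : closed W -> closed [set x | W (x, y)].
Proof. by move: W; apply/continuous_closedP/continuous_pairl. Qed.

Lemma closed_sectionr (W : set (T * U)) x : closed W -> closed [set y | W (x, y)].
Proof. by move: W; apply/continuous_closedP/continuous_pairr. Qed.

Lemma dense_setX (A : set T) (B : set U) : dense A -> dense B -> dense (A `*` B).
Proof.
move=> dA dB W [[x y] Wxy] oW.
have [a [/= Way Aa]] := dA _ (ex_intro _ x Wxy) (open_sectionl y oW).
have [b [/= Wab Bb]] := dB _ (ex_intro _ y Way) (open_sectionr a oW).
by exists (a, b).
Qed.

End ProductSections.

Lemma clopen_connectedT (T : topologicalType) (A : set T) :
  connected [set: T] -> clopen A -> A !=set0 -> A = setT.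
Proof.
move=> cT [oA cA] A0; rewrite -[A]setTI.
by apply: cT; [rewrite setTI | exists A | exists A].
Qed.

Section ContinuousPreference.
Variables (X : topologicalType) (Q : set (X * X)).
Hypothesis prefQ : continuous_preference Q.

Lemma preference_refl x : Q (x, x).
Proof. by case: prefQ => -[/(_ x x) []]. Qed.

Lemma open_strict_upper x : open [set z | ~ Q (z, x)].
Proof. by apply: closed_openC; apply: closed_sectionl; case: prefQ. Qed.

Lemma open_strict_lower x : open [set z | ~ Q (x, z)].
Proof. by apply: closed_openC; apply: closed_sectionr; case: prefQ. Qed.

Lemma connected_strict_between x y : connected [set: X] ->
  ~ Q (x, y) -> exists z, ~ Q (x, z) /\ ~ Q (z, y).
Proof.
move=> cX nQxy; apply: contrapT => /forallNP no_between.
have [[_ transQ] closedQ] := prefQ.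
have upper_x : [set z | Q (x, z)] = ~` [set z | Q (z, y)].
  apply/seteqP; split=> z /= Qz.
    by move=> Qzy; apply: nQxy; exact: transQ Qz Qzy.
  by apply: contrapT => nQxz; apply: (no_between z).
suff upper_full : [set z | Q (x, z)] = setT.
  by apply: nQxy; rewrite -[_ (x, y)]/([set z | Q (x, z)] y) upper_full.
apply: clopen_connectedT => //; last by exists x; exact: preference_refl.
split; last exact: closed_sectionr.
by rewrite upper_x; apply: closed_openC; exact: closed_sectionl.
Qed.

Lemma dense_strict_between (B : set X) x y : connected [set: X] -> dense B ->
  ~ Q (x, y) -> exists2 b, B b & ~ Q (x, b) /\ ~ Q (b, y).
Proof.
move=> cX dB /(connected_strict_between cX) between_xy.
have [b [[/= nQxb nQby] Bb]] :
    ([set z | ~ Q (x, z)] `&` [set z | ~ Q (z, y)]) `&` B !=set0.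
  apply: dB; first exact: between_xy.
  by apply: openI; [exact: open_strict_lower | exact: open_strict_upper].
by exists b.
Qed.

End ContinuousPreference.

Section AgreeingPreferences.
Variables (X : topologicalType) (B : set X) (P Q : set (X * X)).
Hypotheses (dB : dense B) (prefP : continuous_preference P)
  (prefQ : continuous_preference Q).
Hypothesis agree : P `&` (B `*` B) = Q `&` (B `*` B).

Lemma agree_le a b : B a -> B b -> P (a, b) -> Q (a, b).
Proof.
move=> Ba Bb Pab.
have : (P `&` (B `*` B)) (a, b) by [].
by rewrite agree => -[].
Qed.

Lemma strict_le_agree u v : ~ Q (v, u) -> P (u, v).
Proof.
move=> nQvu; apply: contrapT => nPuv.
have [[totalP _] closedP] := prefP; have [_ closedQ] := prefQ.
pose opposite := ~` P `&` ((fun st => (st.2, st.1)) @^-1` ~` Q).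
have open_opposite : open opposite.
  apply: openI; first exact: closed_openC.
  by move: (~` Q) (closed_openC closedQ); apply/continuousP; exact: swap_continuous.
have [[a b] [[/= nPab nQba] [/= Ba Bb]]] :=
  dense_setX dB dB (ex_intro _ (u, v) (conj nPuv nQvu)) open_opposite.
by apply: nQba; apply: agree_le => //; case: (totalP a b).
Qed.

Lemma agree_sub : connected [set: X] -> P `<=` Q.
Proof.
move=> cX [x y] Pxy; apply: contrapT => nQxy.
have [[_ transP] _] := prefP.
have [b Bb [nQxb nQby]] := dense_strict_between prefQ cX dB nQxy.
have Pxb : P (x, b) by apply: transP Pxy (strict_le_agree nQby).
have [c Bc [nQxc nQcb]] := dense_strict_between prefQ cX dB nQxb.
by apply: nQcb; apply: agree_le => //; apply: transP (strict_le_agree nQxc) Pxb.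
Qed.

End AgreeingPreferences.

Theorem theorem13 (X : topologicalType) (B : set X) (P Q : set (X * X)) :
  connected [set: X] -> locally_compact [set: X] -> polish X ->
  dense B ->
  continuous_preference P -> continuous_preference Q ->
  P `&` (B `*` B) = Q `&` (B `*` B) ->
  P = Q.
Proof.
move=> cX _ _ dB prefP prefQ agree.
apply/seteqP; split.
- exact: agree_sub dB prefP prefQ agree cX.
- exact: agree_sub dB prefQ prefP (esym agree) cX.
Qed.
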